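(* Let $n$ be primover to base $2$. Then $2^n-1$ is primover to base $2$ if and only if $n$ is prime.
   Context: For an integer $a>1$ and an odd integer $n>1$ with $\gcd(a,n)=1$: $h_a(n)$ denotes the multiplicative order of $a$ modulo $n$. A cyclotomic coset of $a$ modulo $n$ is a set of the form $\{\, s a^j \bmod n : j\ge 0\,\}$ with $s\in\{1,\dots,n-1\}$; these cosets partition $\{1,\dots,n-1\}$, and $r_a(n)$ denotes the number of distinct cyclotomic cosets of $a$ modulo $n$. An odd composite number $n$ coprime to $a$ is called an overpseudoprime to base $a$ if $n=r_a(n)\,h_a(n)+1$. An integer $N>1$ is called primover to base $a$ if it is either prime or an overpseudoprime to base $a$. *)

From mathcomp Require Import all_boot.
Set Implicit Arguments. Unset Strict Implicit. Unset Printing Implicit Defensive.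

(* Multiplicative order of a modulo n: the least k >= 1 with a^k = 1 (mod n).
   For gcd(a,n)=1 and n>1 such k exists and k <= totient n < n, so a search
   over 1..n is exhaustive. (If none exists the value is n+1, irrelevant.) *)
Definition ordmod (a n : nat) : nat :=
  (find (fun k => a ^ k.+1 %% n == 1 %% n) (iota 0 n)).+1.

(* The cyclotomic coset {s a^j mod n : j >= 0}, as a set of residues 'I_n.
   Since a^j mod n is periodic with period ordmod a n < n, j < n suffices. *)
Definition cyccoset (a n s : nat) : {set 'I_n} :=
  [set x : 'I_n | [exists j : 'I_n, nat_of_ord x == (s * a ^ j) %% n]].

Definition ncosets (a n : nat) : nat :=
  #|[set cyccoset a n (nat_of_ord s) | s : 'I_n & 0 < nat_of_ord s]|.

Definition overpseudoprime (a n : nat) : Prop :=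
  [/\ odd n, 1 < n, ~~ prime n, coprime a n & n = ncosets a n * ordmod a n + 1].

Definition primover (a N : nat) : Prop :=
  1 < N /\ (prime N \/ overpseudoprime a N).

From mathcomp Require Import all_boot zify.
Set Implicit Arguments. Unset Strict Implicit. Unset Printing Implicit Defensive.

(* Let N > 1 and M = 2^N - 1.  Multiplication by 2 permutes the residues
   modulo M, 2^N = 1 (mod M), and ordmod 2 M = N.  The cyclotomic cosets of
   the nonzero residues partition {1, ..., M-1}, and each has at most N
   elements, because N is a period of every orbit.  Hence
        M - 1 = sum of the coset sizes <= r_2(M) * N,
   with equality -- i.e. M = r_2(M) h_2(M) + 1 -- iff every coset is full.
   - If N is prime, a shorter period k < N would combine with N into the
     period gcd(k, N) = 1, which only the zero residue has: all cosets are
     full, so M is prime or an overpseudoprime.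
   - If N has a divisor 1 < d < N, then 2^d - 1 is a proper divisor of M, so
     M is not prime, and the residue M / (2^d - 1) has period d, so its coset
     is not full: M is not an overpseudoprime either. *)

Section Periods.
Variables (a m t : nat).

Definition mul_period (k : nat) : Prop := t * a ^ k = t %[mod m].

Lemma mul_periodM k q : mul_period k -> mul_period (k * q).
Proof.
rewrite /mul_period => per_k; elim: q => [|q IHq]; first by rewrite muln0 muln1.
by rewrite mulnS expnD mulnA -modnMml per_k modnMml.
Qed.

Lemma mul_periodDr k l : mul_period k -> mul_period (k + l) -> mul_period l.
Proof.
rewrite /mul_period expnD mulnA => per_k per_kl.
by rewrite -per_kl -modnMml -per_k modnMml.
Qed.

Lemma mul_period_gcd k l : 0 < k -> mul_period k -> mul_period l ->
  mul_period (gcdn k l).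
Proof.
move=> k_gt0 per_k per_l; have [u v Bezout _] := egcdnP l k_gt0.
apply: (@mul_periodDr (v * l)); first by rewrite mulnC; apply: mul_periodM.
by rewrite -Bezout mulnC; apply: mul_periodM.
Qed.

Lemma mul_period_mod k j : mul_period k -> t * a ^ j = t * a ^ (j %% k) %[mod m].
Proof.
move=> per_k; rewrite {1}(divn_eq j k) [j %/ k * k]mulnC expnD mulnA -modnMml.
by rewrite (mul_periodM (j %/ k) per_k) modnMml.
Qed.
End Periods.

Lemma mul_period1_base2 m t : mul_period 2 m t 1 -> t = 0 %[mod m].
Proof.
rewrite /mul_period expn1 muln2 -addnn => tt_t; apply/eqP.
by rewrite -(eqn_modDl t) addn0 tt_t.
Qed.

Lemma ordmod_eq a n k : 0 < k <= n -> a ^ k = 1 %[mod n] ->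
  (forall j, 0 < j < k -> a ^ j <> 1 %[mod n]) -> ordmod a n = k.
Proof.
case/andP=> k_gt0 k_le_n ak1 k_min; rewrite /ordmod.
set unit_pow := (fun j => _).
have pow_k : unit_pow k.-1 by rewrite /unit_pow prednK //; apply/eqP.
have has_pow : has unit_pow (iota 0 n).
  by apply/hasP; exists k.-1; rewrite // mem_iota add0n prednK.
have find_lt : find unit_pow (iota 0 n) < n.
  by rewrite -[X in _ < X](size_iota 0) -has_find.
apply/eqP; rewrite eqn_leq; apply/andP; split.
  rewrite -[k]prednK // ltnS leqNgt; apply/negP => k_lt_find.
  have := before_find 0 k_lt_find.
  by rewrite nth_iota ?add0n ?pow_k // (ltn_trans k_lt_find).
have := nth_find 0 has_pow; rewrite nth_iota // add0n => /eqP pow_find.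
by rewrite leqNgt; apply/negP => find_lt_k; apply: (k_min _ _ pow_find).
Qed.

Lemma pow2_ge2 k : 0 < k -> 2 <= 2 ^ k.
Proof. by case: k => // k _; rewrite expnS leq_pmulr ?expn_gt0. Qed.

Section Mersenne.
Variable N : nat.
Hypothesis N_gt1 : 1 < N.
Local Notation M := (2 ^ N - 1).

Lemma leq_exponent_mersenne : N <= M.
Proof. by have := ltn_expl N (isT : 1 < 2); lia. Qed.

Lemma mersenne_gt1 : 1 < M.
Proof. exact: leq_trans N_gt1 leq_exponent_mersenne. Qed.

Lemma mersenne_gt0 : 0 < M.
Proof. exact: ltnW mersenne_gt1. Qed.

Lemma odd_mersenne : odd M.
Proof.
have two_pow_even : ~~ odd (2 ^ N) by rewrite oddX negb_or -lt0n (ltnW N_gt1).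
by rewrite oddB ?expn_gt0 // (negbTE two_pow_even).
Qed.

Lemma coprime2_mersenne : coprime 2 M.
Proof. by rewrite coprime2n odd_mersenne. Qed.

Lemma mul_period_mersenne s : mul_period 2 M s N.
Proof.
have pow_N : 2 ^ N = 1 %[mod M].
  by rewrite -[X in X %% _ = _](subnK (expn_gt0 2 N)) addnC modnDr.
by rewrite /mul_period -modnMmr pow_N modnMmr muln1.
Qed.

(* For 0 < k < N we have 1 < 2^k < M, so 2^k is not 1 modulo M. *)
Lemma ordmod_mersenne : ordmod 2 M = N.
Proof.
apply: ordmod_eq; first by rewrite (ltnW N_gt1) leq_exponent_mersenne.
  by have := mul_period_mersenne 1; rewrite /mul_period !mul1n.
move=> j /andP[j_gt0 j_lt_N]; rewrite !modn_small ?mersenne_gt1 //.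
  by have := pow2_ge2 j_gt0; lia.
have := pow2_ge2 j_gt0; have := leq_exp2l j.+1 N (isT : 1 < 2).
by rewrite j_lt_N expnS; lia.
Qed.
End Mersenne.

Section Cosets.
Variable N : nat.
Hypothesis N_gt1 : 1 < N.
Local Notation M := (2 ^ N - 1).
Local Notation C s := (cyccoset 2 M s).

(* The coset of s is the set of residues of s * 2^j for ALL j >= 0: the
   definition only ranges over j < M, which suffices since N <= M is a period. *)
Lemma cyccosetP s (x : 'I_M) : reflect (exists j, val x = s * 2 ^ j %% M) (x \in C s).
Proof.
rewrite inE; apply: (iffP existsP) => [[j /eqP x_eq] | [j x_eq]]; first by exists j.
have j_mod_lt : j %% N < M.
  exact: leq_trans (ltn_pmod j (ltnW N_gt1)) (leq_exponent_mersenne N_gt1).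
exists (Ordinal j_mod_lt); apply/eqP.
by rewrite x_eq /= (mul_period_mod j (mul_period_mersenne N s)).
Qed.

Lemma cyccoset_refl (s : 'I_M) : s \in C s.
Proof. by apply/cyccosetP; exists 0; rewrite muln1 modn_small. Qed.

Lemma cyccoset_trans s (x y : 'I_M) : x \in C s -> y \in C x -> y \in C s.
Proof.
move=> /cyccosetP[j x_eq] /cyccosetP[i y_eq]; apply/cyccosetP; exists (j + i).
by rewrite y_eq x_eq modnMml expnD mulnA.
Qed.

(* Symmetry: multiplying by 2^(j(N-1)) undoes multiplication by 2^j. *)
Lemma cyccoset_sym (s x : 'I_M) : x \in C s -> s \in C x.
Proof.
move=> /cyccosetP[j x_eq]; apply/cyccosetP; exists (j * N.-1).
rewrite x_eq modnMml -mulnA -expnD -{1}[j]muln1 -mulnDr add1n prednK ?(ltnW N_gt1) //.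
by rewrite [j * N]mulnC (mul_periodM j (mul_period_mersenne N s)) modn_small.
Qed.

Lemma cyccoset_eq (x y : 'I_M) : (y \in C x) = (C y == C x).
Proof.
apply/idP/eqP => [y_in | <-]; last exact: cyccoset_refl.
apply/setP => z; apply/idP/idP; first exact: cyccoset_trans.
exact: cyccoset_trans (cyccoset_sym y_in).
Qed.

(* Since 2 is invertible modulo M, the orbit of a nonzero residue avoids 0. *)
Lemma orbit_nonzero s j : 0 < s < M -> s * 2 ^ j %% M != 0.
Proof.
case/andP=> s_gt0 s_lt_M; apply/negP => /eqP M_dvd.
have : M %| s * 2 ^ j by rewrite /dvdn M_dvd.
rewrite Gauss_dvdl; last by rewrite coprime_sym coprimeXl // coprime2_mersenne.
by move/(dvdn_leq s_gt0); rewrite leqNgt s_lt_M.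
Qed.

Lemma cyccoset_gt0 (s x : 'I_M) : 0 < s -> x \in C s -> 0 < x.
Proof.
move=> s_gt0 /cyccosetP[j x_eq].
by rewrite lt0n x_eq orbit_nonzero // s_gt0 ltn_ord.
Qed.

Definition orbit_elt (s p : nat) (j : 'I_p) : 'I_M :=
  Ordinal (ltn_pmod (s * 2 ^ j) (mersenne_gt0 N_gt1)).

Lemma cyccoset_orbit_sub (s : 'I_M) p : 0 < p -> mul_period 2 M s p ->
  C s \subset [set orbit_elt s j | j : 'I_p].
Proof.
move=> p_gt0 per_p; apply/subsetP => x /cyccosetP[j x_eq]; apply/imsetP.
exists (Ordinal (ltn_pmod j p_gt0)) => //.
by apply: val_inj; rewrite /= x_eq (mul_period_mod j per_p).
Qed.

Lemma card_cyccoset_le (s : 'I_M) p : 0 < p -> mul_period 2 M s p -> #|C s| <= p.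
Proof.
move=> p_gt0 per_p.
apply: leq_trans (subset_leq_card (cyccoset_orbit_sub p_gt0 per_p)) _.
by apply: leq_trans (leq_imset_card _ _) _; rewrite card_ord.
Qed.

Lemma card_cyccoset_leN (s : 'I_M) : #|C s| <= N.
Proof. exact: card_cyccoset_le (ltnW N_gt1) (mul_period_mersenne N s). Qed.

(* For prime N, any period 0 < k < N combines with the period N into the
   period gcd(k, N) = 1, which only the zero residue has. *)
Lemma prime_short_period t k : prime N -> 0 < k < N -> mul_period 2 M t k ->
  t = 0 %[mod M].
Proof.
move=> N_prime /andP[k_gt0 k_lt_N] per_k; apply: mul_period1_base2.
have coprime_kN : coprime k N by rewrite coprime_sym prime_coprime // gtnNdvd.
have := mul_period_gcd k_gt0 per_k (mul_period_mersenne N t).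
by rewrite (eqP coprime_kN).
Qed.

Lemma card_cyccoset_prime (s : 'I_M) : prime N -> 0 < s -> #|C s| = N.
Proof.
move=> N_prime s_gt0.
have C_eq : C s = [set orbit_elt s j | j : 'I_N].
  have sub := cyccoset_orbit_sub (ltnW N_gt1) (mul_period_mersenne N s).
  apply/eqP; rewrite eqEsubset sub /=.
  by apply/subsetP => x /imsetP[j _ ->]; apply/cyccosetP; exists j.
have no_repeat (i j : 'I_N) : i < j -> s * 2 ^ i %% M <> s * 2 ^ j %% M.
  move=> i_lt_j same.
  have i_zero : s * 2 ^ i = 0 %[mod M].
    apply: (@prime_short_period _ (j - i) N_prime).
      by rewrite subn_gt0 i_lt_j (leq_ltn_trans (leq_subr _ _)).
    by rewrite /mul_period -mulnA -expnD subnKC ?(ltnW i_lt_j).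
  by have := @orbit_nonzero s i; rewrite s_gt0 ltn_ord i_zero mod0n => /(_ isT).
rewrite C_eq card_imset ?card_ord // => i j /(congr1 val) /= same.
apply/val_inj; case: (ltngtP i j) => // [i_lt_j | j_lt_i].
  by case: (no_repeat _ _ i_lt_j same).
by case: (no_repeat _ _ j_lt_i (esym same)).
Qed.

Local Notation nonzero_residues := [set s : 'I_M | 0 < s].
Local Notation nonzero_cosets := [set C s | s : 'I_M & 0 < s].

(* The nonzero cosets partition the nonzero residues (they are the classes
   of an equivalence relation), so their sizes add up to M - 1. *)
Lemma partition_cyccosets : partition nonzero_cosets nonzero_residues.
Proof.
suff <- : preim_partition (fun s : 'I_M => C s) nonzero_residues = nonzero_cosets.
  exact: preim_partitionP.
apply: eq_in_imset => x; rewrite inE => x_gt0; apply/setP => y.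
rewrite [LHS]inE eq_sym -cyccoset_eq; apply/andP/idP => [[] // | y_in].
by split=> //; rewrite inE (cyccoset_gt0 x_gt0 y_in).
Qed.

Lemma sum_card_cyccosets : \sum_(A in nonzero_cosets) #|A| = M.-1.
Proof.
have -> : M.-1 = #|nonzero_residues|.
  have -> : nonzero_residues = [set~ Ordinal (mersenne_gt0 N_gt1)].
    by apply/setP => x; rewrite !inE -val_eqE lt0n.
  by rewrite cardsC1 card_ord.
exact/esym/card_partition/partition_cyccosets.
Qed.

(* Since every coset has at most N = ordmod 2 M elements, the equation
   M = r h + 1 holds exactly when every nonzero coset has N elements. *)
Lemma mersenne_count_eq :
  M = ncosets 2 M * ordmod 2 M + 1 <-> forall s : 'I_M, 0 < s -> #|C s| = N.
Proof.
have size_le A : A \in nonzero_cosets -> #|A| <= N ?= iff (#|A| == N).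
  by move=> /imsetP[s _ ->]; apply/leqif_eq/card_cyccoset_leN.
have := leqif_sum size_le; rewrite sum_card_cyccosets sum_nat_const.
rewrite ordmod_mersenne // /ncosets => /eq_leqif sum_eq.
have M_eq : M = M.-1 + 1 by rewrite addn1 prednK ?(mersenne_gt0 N_gt1).
rewrite {1}M_eq; split=> [/addIn /eqP | all_full].
  rewrite sum_eq => /forall_inP all_full s s_gt0.
  by apply/eqP/all_full/imsetP; exists s; rewrite ?inE.
congr (_ + 1); apply/eqP; rewrite sum_eq.
by apply/forall_inP => A /imsetP[s]; rewrite inE => s_gt0 ->; rewrite all_full.
Qed.
End Cosets.

(* b^d - 1 divides b^n - 1 whenever d divides n, as b^d = 1 (mod b^d - 1). *)
Lemma dvdn_pow_sub1 b d n : 0 < b -> d %| n -> b ^ d - 1 %| b ^ n - 1.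
Proof.
move=> b_gt0 /dvdnP[q ->]; rewrite -eqn_mod_dvd ?expn_gt0 ?b_gt0 //.
have pow_d : b ^ d = 1 %[mod b ^ d - 1].
  have bd_gt0 : 0 < b ^ d by rewrite expn_gt0 b_gt0.
  by rewrite -[X in X %% _ = _](subnK bd_gt0) addnC modnDr.
by rewrite mulnC expnM -modnXm pow_d modnXm exp1n.
Qed.

Section CompositeExponent.
Variables N d : nat.
Hypotheses (d_gt1 : 1 < d) (d_lt_N : d < N) (d_dvd_N : d %| N).
Local Notation M := (2 ^ N - 1).
Local Notation D := (2 ^ d - 1).

Lemma composite_exponent_gt1 : 1 < N. Proof. exact: ltn_trans d_lt_N. Qed.

Lemma mersenne_divisor_gt1 : 1 < D.
Proof. by have := ltn_exp2l 1 d (isT : 1 < 2); rewrite expn1 d_gt1; lia. Qed.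

Lemma mersenne_divisor_ltn : D < M.
Proof.
have := ltn_exp2l d N (isT : 1 < 2); have := pow2_ge2 (ltnW d_gt1).
by rewrite d_lt_N; lia.
Qed.

Lemma mersenne_composite : ~~ prime M.
Proof.
apply/primePn; right; exists D; last exact: dvdn_pow_sub1.
by rewrite mersenne_divisor_gt1 mersenne_divisor_ltn.
Qed.

(* The residue M / (2^d - 1) has period d, so its coset is too small. *)
Lemma short_cyccoset : exists2 s : 'I_M, 0 < s & #|cyccoset 2 M s| < N.
Proof.
have D_dvd_M : D %| M by apply: dvdn_pow_sub1.
have M_gt0 : 0 < M := mersenne_gt0 composite_exponent_gt1.
have s_lt_M : M %/ D < M by rewrite ltn_Pdiv ?mersenne_divisor_gt1.
exists (Ordinal s_lt_M).
  by rewrite /= divn_gt0 ?(ltnW mersenne_divisor_gt1) // dvdn_leq.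
apply: leq_ltn_trans d_lt_N.
apply: (card_cyccoset_le composite_exponent_gt1 (ltnW d_gt1)).
have pow_d : 2 ^ d = D + 1 by rewrite subnK ?expn_gt0.
by rewrite /mul_period /= [X in _ * X]pow_d mulnDr muln1 divnK // modnDl.
Qed.
End CompositeExponent.

Unset Implicit Arguments.

Theorem theorem3 (n : nat) :
  primover 2 n -> (primover 2 (2 ^ n - 1) <-> prime n).
Proof.
move=> [n_gt1 _]; split=> [[_ M_primover] | n_prime].
  apply/negPn/negP => /primePn[|[d /andP[d_gt1 d_lt_n] d_dvd_n]].
    by rewrite ltnNge n_gt1.
  have [s s_gt0 s_short] := short_cyccoset d_gt1 d_lt_n d_dvd_n.
  case: M_primover => [M_prime | [_ _ _ _ /(mersenne_count_eq n_gt1) all_full]].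
    by have := mersenne_composite d_gt1 d_lt_n d_dvd_n; rewrite M_prime.
  by rewrite all_full ?ltnn in s_short.
split; first exact: mersenne_gt1.
have [M_prime | M_composite] := boolP (prime (2 ^ n - 1)); [by left | right].
split=> //; [exact: odd_mersenne | exact: mersenne_gt1 | exact: coprime2_mersenne |].
by apply/(mersenne_count_eq n_gt1) => s; apply: card_cyccoset_prime.
Qed.
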